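(* For $j\ge 0$ define the permutation of $\{1,\dots,2j+5\}$ $$\alpha^{(j)}=2j+4,\ 3,\ \omega^{(j)},\ 1,\ 5,\ 2,$$ where $\omega^{(j)}$ is the concatenation, for $i=j,j-1,\dots,1$ (in this order), of the pairs $2i+2,\,2i+5$; that is, $\omega^{(j)}=2j+2,2j+5,2j,2j+3,2j-2,2j+1,\dots,6,9,4,7$ (and $\omega^{(0)}$ is empty, so $\alpha^{(0)}=43152$). Then: (i) the set $\{\alpha^{(j)}\}_{j\ge0}$ is an infinite antichain in the permutation pattern poset; (ii) no $\alpha^{(j)}$ is $2$-sortable; (iii) each $\alpha^{(j)}$ is minimal with this property: deleting any single entry of $\alpha^{(j)}$ (and standardizing) yields a $2$-sortable permutation.
   Context: The $\mathfrak{D}^k\mathfrak{I}$ machine consists of $k$ stacks $D_1,\dots,D_k$ (decreasing stacks) followed in series by a stack $I$ (increasing stack). The input permutation is read from left to right. The elements of each $D_i$ must be in decreasing order from top to bottom (top is largest), and those of $I$ in increasing order from top to bottom (top is smallest). Operations: $d_0$ pushes the next input element into $D_1$; $d_i$ ($1\le i\le k-1$) moves the top of $D_i$ to $D_{i+1}$; $d_k$ moves the top of $D_k$ to $I$; $d_{k+1}$ pops the top of $I$ and appends it to the output. An operation is legal if it respects the stack restrictions. A permutation $\pi$ is $k$-sortable if some sequence of legal operations of the $\mathfrak{D}^k\mathfrak{I}$ machine outputs the elements of $\pi$ in increasing order. The permutation pattern poset orders permutations by pattern containment $\sigma\le\pi$. *)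

From mathcomp Require Import all_boot.
Set Implicit Arguments. Unset Strict Implicit. Unset Printing Implicit Defensive.

(* Permutations are sequences of distinct naturals (one-line notation). *)

Definition std (s : seq nat) : seq nat :=
  map (fun x => (count (fun y => y < x) s).+1) s.

Definition contains (sigma pi : seq nat) : Prop :=
  exists m : bitseq, std (mask m pi) = std sigma.

Definition delete_at (i : nat) (s : seq nat) : seq nat := take i s ++ drop i.+1 s.

Definition omega (j : nat) : seq nat :=
  flatten [seq [:: i.*2.+2; i.*2 + 5] | i <- rev (iota 1 j)].

Definition alpha (j : nat) : seq nat :=
  [:: j.*2 + 4; 3] ++ omega j ++ [:: 1; 5; 2].

(* The D^k I machine.  State = (input, [D_1;...;D_k], stI, output); stacks are
   lists with head = top; output is accumulated left to right. *)
Definition mstate := (seq nat * seq (seq nat) * seq nat * seq nat)%type.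

(* decreasing stack: top is largest, so a new element must exceed the top *)
Definition can_push_dec (x : nat) (s : seq nat) : bool :=
  if s is y :: _ then y < x else true.
(* increasing stack: top is smallest *)
Definition can_push_inc (x : nat) (s : seq nat) : bool :=
  if s is y :: _ then x < y else true.

(* remove the top element from source i (0 = input, i >= 1 = D_i) *)
Definition take_src (i : nat) (st : mstate) : option (nat * mstate) :=
  let: (inp, ds, stI, out) := st in
  if i == 0 then
    (if inp is x :: r then Some (x, (r, ds, stI, out)) else None)
  else
    (if nth [::] ds i.-1 is x :: r
     then Some (x, (inp, set_nth [::] ds i.-1 r, stI, out)) else None).

Definition step (k op : nat) (st : mstate) : option mstate :=
  if op < k then
    (* d_op : source (input or D_op) -> D_{op+1} *)
    match take_src op st with
    | Some (x, (inp, ds, stI, out)) =>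
        let D := nth [::] ds op in
        if can_push_dec x D then Some (inp, set_nth [::] ds op (x :: D), stI, out)
        else None
    | None => None
    end
  else if op == k then
    (* d_k : source (D_k, or input if k = 0) -> I *)
    match take_src k st with
    | Some (x, (inp, ds, stI, out)) =>
        if can_push_inc x stI then Some (inp, ds, x :: stI, out) else None
    | None => None
    end
  else if op == k.+1 then
    let: (inp, ds, stI, out) := st in
    if stI is x :: r then Some (inp, ds, r, rcons out x) else None
  else None.

Definition run (k : nat) (ops : seq nat) (st : mstate) : option mstate :=
  foldl (fun o op => obind (step k op) o) (Some st) ops.

Definition sortable (k : nat) (pi : seq nat) : Prop :=
  exists ops : seq nat,
    run k ops (pi, nseq k [::], [::], [::]) =
    Some ([::], nseq k [::], [::], sort leq pi).

From mathcomp Require Import all_boot zify.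
Set Implicit Arguments. Unset Strict Implicit. Unset Printing Implicit Defensive.

(** Restricting a run of the machine to the entries of a subsequence, renamed by
   their ranks, gives a run on the pattern, so 2-sortable permutations are closed
   under patterns. Hence it suffices to show that alpha^(j) is not 2-sortable while
   all its one-point deletions are: minimal non-members of a pattern class are
   pairwise incomparable.

   alpha^(j) is not 2-sortable: as 1 cannot be pushed onto D_1 above 3, the entry 3
   must move to D_2 before 1 is read. At that moment everything read so far exceeds
   2, so D_1 and D_2 hold nothing else, nothing has been output, and the other read
   entries lie in I; among them is some y >= 4 for which a larger entry x is still
   unread. From then on x cannot enter I before y is output, and 2 cannot leave D_1
   before x has entered I, so y is output before 2. The predicate [stuck] collects
   these situations and is invariant under every step.

   The one-point deletions are sorted by explicit operation sequences, in which the
   pairs 2i+2, 2i+5 of omega^(j) are processed by a fixed block of six operations. *)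

(** * The machine with two decreasing stacks *)

Lemma run_cons k op ops st :
  run k (op :: ops) st = if step k op st is Some st' then run k ops st' else None.
Proof. by rewrite /run /=; case: (step k op st) => //=; elim: ops. Qed.

Lemma run_cat k ops1 ops2 st :
  run k (ops1 ++ ops2) st = if run k ops1 st is Some st' then run k ops2 st' else None.
Proof.
elim: ops1 st => [|op ops1 IH] st //=.
by rewrite !run_cons; case: (step k op st).
Qed.

Lemma step2P op inp d1 d2 si out st' :
  step 2 op (inp, [:: d1; d2], si, out) = Some st' ->
  [\/ exists x r, [/\ op = 0, inp = x :: r, can_push_dec x d1
                    & st' = (r, [:: x :: d1; d2], si, out)],
      exists x r, [/\ op = 1, d1 = x :: r, can_push_dec x d2
                    & st' = (inp, [:: r; x :: d2], si, out)],
      exists x r, [/\ op = 2, d2 = x :: r, can_push_inc x si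
                    & st' = (inp, [:: d1; r], x :: si, out)] |
      exists x r, [/\ op = 3, si = x :: r & st' = (inp, [:: d1; d2], r, rcons out x)]].
Proof.
rewrite /step; case: op => [|[|[|[|op]]]] //=.
- case: inp => [|x r] //=; case: ifP => // h [<-]; apply: Or41; by exists x, r.
- case: d1 => [|x r] //=; case: ifP => // h [<-]; apply: Or42; by exists x, r.
- case: d2 => [|x r] //=; case: ifP => // h [<-]; apply: Or43; by exists x, r.
- case: si => [|x r] //= [<-]; apply: Or44; by exists x, r.
Qed.

Lemma step_d0 x r d1 d2 si out : can_push_dec x d1 ->
  step 2 0 (x :: r, [:: d1; d2], si, out) = Some (r, [:: x :: d1; d2], si, out).
Proof. by rewrite /step /= => ->. Qed.

Lemma step_d1 x r d2 inp si out : can_push_dec x d2 ->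
  step 2 1 (inp, [:: x :: r; d2], si, out) = Some (inp, [:: r; x :: d2], si, out).
Proof. by rewrite /step /= => ->. Qed.

Lemma step_d2 x r d1 inp si out : can_push_inc x si ->
  step 2 2 (inp, [:: d1; x :: r], si, out) = Some (inp, [:: d1; r], x :: si, out).
Proof. by rewrite /step /= => ->. Qed.

Lemma step_d3 x r inp ds out :
  step 2 3 (inp, ds, x :: r, out) = Some (inp, ds, r, rcons out x).
Proof. by []. Qed.

Lemma run_pops inp d1 d2 si out :
  run 2 (nseq (size si) 3) (inp, [:: d1; d2], si, out) = Some (inp, [:: d1; d2], [::], out ++ si).
Proof.
elim: si out => [|x si IH] out /=; first by rewrite cats0.
by rewrite run_cons /= IH cat_rcons.
Qed.

Lemma can_push_dec_all x d : sorted gtn d -> can_push_dec x d = all (gtn x) d.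
Proof.
case: d => [|y d] //= hd; rewrite (path_sortedE (rev_trans ltn_trans)) in hd.
case/andP: hd => /allP hy _; apply/idP/andP => [xy|[] //]; split=> //.
by apply/allP => z /hy /= zy; apply: ltn_trans xy.
Qed.

Lemma can_push_inc_all x d : sorted ltn d -> can_push_inc x d = all (ltn x) d.
Proof.
case: d => [|y d] //= hd; rewrite (path_sortedE ltn_trans) in hd.
case/andP: hd => /allP hy _; apply/idP/andP => [xy|[] //]; split=> //.
by apply/allP => z /hy /= zy; apply: ltn_trans zy.
Qed.

Lemma sorted_gtn_head z r x : sorted gtn (z :: r) -> x \in r -> x < z.
Proof.
rewrite /= (path_sortedE (rev_trans ltn_trans)) => /andP [/allP r_lt _] x_r.
exact: r_lt.
Qed.

Lemma can_push_dec_mono x y d : x <= y -> can_push_dec x d -> can_push_dec y d.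
Proof. by case: d => //= z d h h2; exact: leq_trans h2 h. Qed.

Lemma can_push_inc_mono x y d : y <= x -> can_push_inc x d -> can_push_inc y d.
Proof. by case: d => //= z d h h2; exact: leq_ltn_trans h h2. Qed.

Definition stacks_sorted (st : mstate) : Prop :=
  match st with
  | (_, [:: d1; d2], si, _) => [/\ sorted gtn d1, sorted gtn d2 & sorted ltn si]
  | _ => False
  end.

Definition contents (st : mstate) : seq nat :=
  let: (inp, ds, si, out) := st in inp ++ flatten ds ++ si ++ out.

Lemma sorted_push_dec x d : can_push_dec x d -> sorted gtn d -> sorted gtn (x :: d).
Proof. by case: d => //= y d h ->; rewrite andbT. Qed.

Lemma sorted_push_inc x d : can_push_inc x d -> sorted ltn d -> sorted ltn (x :: d).
Proof. by case: d => //= y d h ->; rewrite andbT. Qed.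

Lemma step2_sorted_perm op st st' : stacks_sorted st -> step 2 op st = Some st' ->
  stacks_sorted st' /\ perm_eq (contents st') (contents st).
Proof.
case: st => [[[inp ds] si] out]; case: ds => [|d1 [|d2 [|? ?]]] // sorted_st H.
move: sorted_st; case/step2P: H =>
  [[x [r [_ -> h ->]]]|[x [r [_ -> h ->]]]|[x [r [_ -> h ->]]]|[x [r [_ -> ->]]]] [s1 s2 s3].
all: split; last by apply/permP => p; rewrite -?cats1 /= !count_cat /= ?count_cat /=; lia.
- by split => //; apply: sorted_push_dec.
- by split => //; [exact: path_sorted s1 | exact: sorted_push_dec].
- by split => //; [exact: path_sorted s2 | exact: sorted_push_inc].
- by split => //; exact: path_sorted s3.
Qed.

Lemma run2_sorted_perm ops st st' : stacks_sorted st -> run 2 ops st = Some st' ->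
  stacks_sorted st' /\ perm_eq (contents st') (contents st).
Proof.
elim: ops st => [|op ops IH] st sorted_st /=; first by case=> <-.
rewrite run_cons; case E: (step 2 op st) => [st1|] // /(IH st1).
have [sorted_st1 perm1] := step2_sorted_perm sorted_st E.
by case=> // sorted_st' perm'; split=> //; exact: perm_trans perm' perm1.
Qed.

Definition start2 (s : seq nat) : mstate := (s, [:: [::]; [::]], [::], [::]).

Lemma stacks_sorted_start s : stacks_sorted (start2 s).
Proof. by []. Qed.

Lemma sortable_of_run s ops si out :
  run 2 ops (start2 s) = Some ([::], [:: [::]; [::]], si, out) ->
  sorted leq (out ++ si) -> sortable 2 s.
Proof.
move=> h sorted_out; exists (ops ++ nseq (size si) 3).
rewrite run_cat h run_pops; congr (Some (_, _, _, _)).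
have [_] := run2_sorted_perm (stacks_sorted_start s) h.
rewrite /= !cats0 perm_catC => perm_out.
rewrite -(sorted_sort leq_trans sorted_out).
exact/(perm_sortP leq_total leq_trans anti_leq).
Qed.

Lemma sortable_of_run_nil s ops si :
  run 2 ops (start2 s) = Some ([::], [:: [::]; [::]], si, [::]) -> sortable 2 s.
Proof.
move=> h; apply: (sortable_of_run h).
have [[_ _ sorted_si] _] := run2_sorted_perm (stacks_sorted_start s) h.
by apply: sub_sorted sorted_si => x y /ltnW.
Qed.

(** * Closure under patterns *)

Lemma leq_count_ltn (l : seq nat) x z : x <= z ->
  count (fun y => y < x) l <= count (fun y => y < z) l.
Proof. by move=> xz; apply: sub_count => y /= /leq_trans; apply. Qed.

Lemma ltn_count_ltn (l : seq nat) x z : x \in l -> x < z ->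
  count (fun y => y < x) l < count (fun y => y < z) l.
Proof.
move=> /perm_to_rem /permP perm_l xz; rewrite !perm_l /= ltnn xz ltnS.
exact: leq_count_ltn (ltnW xz).
Qed.

Section Restriction.
Variables (s : seq nat) (P : pred nat).

Definition rank x := (count (fun y => y < x) (filter P s)).+1.
Definition restrict (l : seq nat) := map rank (filter P l).
Definition restrict_state (st : mstate) : mstate :=
  let: (inp, ds, si, out) := st in (restrict inp, map restrict ds, restrict si, restrict out).

Lemma rank_lt x z : P x -> x \in s -> x < z -> rank x < rank z.
Proof. by move=> px xs xz; rewrite ltnS; apply: ltn_count_ltn xz; rewrite mem_filter px. Qed.

Lemma rank_le x z : x <= z -> rank x <= rank z.
Proof. by move=> xz; rewrite ltnS; exact: leq_count_ltn. Qed.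

Lemma restrict_push_dec x d : P x -> x \in s -> sorted gtn d -> {subset d <= s} ->
  can_push_dec x d -> can_push_dec (rank x) (restrict d).
Proof.
move=> px xs sorted_d sub; rewrite can_push_dec_all // => /allP d_lt_x.
rewrite /restrict; case E: (filter P d) => [|z l] //=.
have /[!mem_filter] /andP [pz zd] : z \in filter P d by rewrite E mem_head.
exact: rank_lt (sub z zd) (d_lt_x z zd).
Qed.

Lemma restrict_push_inc x d : P x -> x \in s -> sorted ltn d ->
  can_push_inc x d -> can_push_inc (rank x) (restrict d).
Proof.
move=> px xs sorted_d; rewrite can_push_inc_all // => /allP x_lt_d.
rewrite /restrict; case E: (filter P d) => [|z l] //=.
have /[!mem_filter] /andP [pz zd] : z \in filter P d by rewrite E mem_head.
exact: rank_lt (x_lt_d z zd).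
Qed.

Definition within (st : mstate) := stacks_sorted st /\ {subset contents st <= s}.

Lemma step_restrict op st st' : within st -> step 2 op st = Some st' ->
  restrict_state st' = restrict_state st \/
  exists op', step 2 op' (restrict_state st) = Some (restrict_state st').
Proof.
case: st => [[[inp ds] si] out]; case: ds => [|d1 [|d2 [|? ?]]]; try by case; case.
move=> [sorted_st sub] H; move: sorted_st sub; case/step2P: H =>
  [[x [r [_ -> h ->]]]|[x [r [_ -> h ->]]]|[x [r [_ -> h ->]]]|[x [r [_ -> ->]]]]
  /= [s1 s2 s3] sub; (case px: (P x); [right | left]; rewrite /restrict /= ?filter_rcons px //).
- have xs : x \in s by apply: sub; rewrite mem_head.
  exists 0; rewrite /step /= restrict_push_dec // => z zd.
  by apply: sub; rewrite !(mem_cat, inE) zd !orbT.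
- have xs : x \in s by apply: sub; rewrite !(mem_cat, inE) eqxx !orbT.
  exists 1; rewrite /step /= restrict_push_dec // => z zd.
  by apply: sub; rewrite !(mem_cat, inE) zd !orbT.
- have xs : x \in s by apply: sub; rewrite !(mem_cat, inE) eqxx !orbT.
  by exists 2; rewrite /step /= restrict_push_inc.
- by exists 3; rewrite /step /= map_rcons.
Qed.

Lemma run_restrict ops st st' : within st -> run 2 ops st = Some st' ->
  exists ops', run 2 ops' (restrict_state st) = Some (restrict_state st').
Proof.
elim: ops st => [|op ops IH] st within_st /=; first by case=> <-; exists [::].
rewrite run_cons; case E: (step 2 op st) => [st1|] // /(IH st1) run_st1.
have [|ops' run'] := run_st1.
  have [sorted1 perm1] := step2_sorted_perm within_st.1 E.
  by split=> // z; rewrite (perm_mem perm1); exact: within_st.2.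
case: (step_restrict within_st E) => [eq_st|[op' step']].
  by exists ops'; rewrite -eq_st.
by exists (op' :: ops'); rewrite run_cons step'.
Qed.

End Restriction.

Lemma sortable_std_filter s P : sortable 2 s -> sortable 2 (std (filter P s)).
Proof.
case=> ops run_s.
have within_s : within s (start2 s) by split => // z /=; rewrite !cats0.
have [ops' run'] := run_restrict P within_s run_s.
exists ops'; move: run'; rewrite /= /restrict /=.
set s' := filter P s; have -> : map (rank s P) s' = std s' by [].
move=> ->; congr (Some (_, _, _, _)).
rewrite filter_sort; [|exact: leq_total|exact: leq_trans].
have sorted_ranks : sorted leq (map (rank s P) (sort leq s')).
  by apply: homo_sorted (sort_sorted leq_total _) => x y; exact: rank_le.
rewrite -(sorted_sort leq_trans sorted_ranks).
by apply/(perm_sortP leq_total leq_trans anti_leq); rewrite /std perm_map // perm_sort.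
Qed.

Lemma sortable_std s : sortable 2 s -> sortable 2 (std s).
Proof. by move/(sortable_std_filter predT); rewrite filter_predT. Qed.

Lemma sortable_contains sigma pi : uniq pi -> sortable 2 pi -> contains sigma pi ->
  sortable 2 (std sigma).
Proof.
move=> uniq_pi sortable_pi [m <-].
have := sortable_std_filter (mem (mask m pi)) sortable_pi.
by move/subseq_uniqP: (mask_subseq m pi) => /(_ uniq_pi) <-.
Qed.

(** * The permutations alpha *)

Definition omega_from lo m := flatten [seq [:: i.*2.+2; i.*2 + 5] | i <- rev (iota lo m)].

Lemma omegaE j : omega j = omega_from 1 j.
Proof. by []. Qed.

Lemma omega_fromS lo m :
  omega_from lo m.+1 = [:: (lo + m).*2.+2; (lo + m).*2 + 5] ++ omega_from lo m.
Proof. by rewrite /omega_from -[m.+1]addn1 iotaD rev_cat. Qed.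

Lemma omega_from_cat i m : omega_from 1 (i + m) = omega_from i.+1 m ++ omega_from 1 i.
Proof. by rewrite /omega_from iotaD rev_cat map_cat flatten_cat add1n. Qed.

Lemma size_omega_from lo m : size (omega_from lo m) = m.*2.
Proof. by elim: m => [|m IH] //; rewrite omega_fromS /= IH doubleS. Qed.

Lemma omegaS j : omega j.+1 = [:: j.*2.+4; j.*2 + 7] ++ omega j.
Proof. by rewrite !omegaE omega_fromS add1n; congr ([:: _; _] ++ _); rewrite doubleS; lia. Qed.

Lemma size_omega j : size (omega j) = j.*2.
Proof. exact: size_omega_from. Qed.

Lemma omega_ge4 j : all (leq 4) (omega j).
Proof. by elim: j => [|j IH] //; rewrite omegaS all_cat IH andbT /=; lia. Qed.

Lemma alpha_perm j : perm_eq (alpha j) (iota 1 (j.*2 + 5)).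
Proof.
elim: j => [|j IH] //.
apply: perm_trans (_ : perm_eq _ ([:: j.*2 + 6; j.*2 + 7] ++ alpha j)) _.
  rewrite /alpha omegaS.
  have -> : j.+1.*2 + 4 = j.*2 + 6 by rewrite doubleS; lia.
  have -> : j.*2.+4 = j.*2 + 4 by lia.
  by apply/permP => q; rewrite /= !count_cat /=; lia.
have -> : j.+1.*2 + 5 = (j.*2 + 5) + 2 by rewrite doubleS; lia.
have -> : iota 1 (j.*2 + 5 + 2) = iota 1 (j.*2 + 5) ++ [:: j.*2 + 6; j.*2 + 7].
  by rewrite iotaD /=; congr (_ ++ [:: _; _]); lia.
by rewrite perm_catC perm_cat2r.
Qed.

Lemma alpha_uniq j : uniq (alpha j).
Proof. by rewrite (perm_uniq (alpha_perm j)) iota_uniq. Qed.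

Lemma size_alpha j : size (alpha j) = j.*2 + 5.
Proof. by rewrite (perm_size (alpha_perm j)) size_iota. Qed.

Lemma sorted_iota_leq m n : sorted leq (iota m n).
Proof. by apply: sub_sorted (iota_ltn_sorted m n) => x y /ltnW. Qed.

Lemma alpha_sort j : sort leq (alpha j) = iota 1 (j.*2 + 5).
Proof.
rewrite -(sorted_sort leq_trans (sorted_iota_leq 1 _)).
exact/(perm_sortP leq_total leq_trans anti_leq)/alpha_perm.
Qed.

Lemma count_ltn_iota x n : count (fun y => y < x) (iota 1 n) = minn x.-1 n.
Proof.
elim: n => [|n IH]; first by rewrite minn0.
by rewrite -[n.+1]addn1 iotaD count_cat IH /=; lia.
Qed.

Lemma std_perm_iota s n : perm_eq s (iota 1 n) -> std s = s.
Proof.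
move=> perm_s; rewrite /std -[RHS]map_id; apply/eq_in_map => x xs /=.
rewrite (permP perm_s) count_ltn_iota.
by move: xs; rewrite (perm_mem perm_s) mem_iota; lia.
Qed.

Lemma std_alpha j : std (alpha j) = alpha j.
Proof. exact: std_perm_iota (alpha_perm j). Qed.

Definition alpha_init j := [:: j.*2 + 4; 3] ++ omega j.

Lemma alphaE j : alpha j = alpha_init j ++ [:: 1; 5; 2].
Proof. by rewrite /alpha catA. Qed.

Lemma size_alpha_init j : size (alpha_init j) = j.*2 + 2.
Proof. by rewrite size_cat size_omega addnC. Qed.

Lemma alpha_init_ge3 j : all (leq 3) (alpha_init j).
Proof.
rewrite all_cat (sub_all _ (omega_ge4 j)) ?andbT => [|x]; last exact: leq_trans.
by apply/allP => x; rewrite !inE => /orP [] /eqP ->; lia.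
Qed.

Section AlphaPrefixes.
Variables (j p : nat).
Hypothesis p_le : p <= j.*2 + 2.
Local Notation A := (alpha j).

Lemma take_alpha_ge3 x : x \in take p A -> 3 <= x.
Proof.
rewrite alphaE takel_cat ?size_alpha_init // => /mem_take.
exact/allP/alpha_init_ge3.
Qed.

Lemma two_in_drop_alpha : 2 \in drop p A.
Proof.
rewrite alphaE drop_cat size_alpha_init ltn_neqAle p_le andbT.
by case: eqP => [->|_] /=; rewrite ?subnn ?mem_cat !inE ?orbT.
Qed.

End AlphaPrefixes.

Lemma two_in_take_alpha j p : 2 \in take p (alpha j) -> drop p (alpha j) = [::].
Proof.
move=> two_in; apply: drop_oversize; rewrite leqNgt size_alpha; apply/negP => p_lt.
have alpha_rcons : alpha j = (alpha_init j ++ [:: 1; 5]) ++ [:: 2] by rewrite alphaE -catA.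
move: two_in; rewrite alpha_rcons takel_cat; last by rewrite size_cat size_alpha_init /=; lia.
move/mem_take; rewrite mem_cat => /orP [/(allP (alpha_init_ge3 j)) //|] //.
Qed.

Lemma three_in_take_alpha j p : 3 \in take p (alpha j) -> 2 <= p.
Proof. by case: p => [|[|p]] //; rewrite /alpha /= !inE => /eqP; lia. Qed.

Lemma omega_ascent i q : q <= i.*2 ->
  exists x y, [/\ y \in (i.*2 + 4) :: take q (omega i ++ [:: 1; 5; 2]), 4 <= y,
                  x \in drop q (omega i ++ [:: 1; 5; 2]) & y < x].
Proof.
elim: i q => [|i IH] [|[|q]] //= q_le; first by exists 5, 4.
- exists (i.*2 + 7), (i.+1.*2 + 4); rewrite omegaS /= !inE !eqxx /= orbT doubleS.
  by split => //; lia.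
- exists (i.*2 + 7), (i.*2.+4); rewrite omegaS /= !inE !eqxx orbT.
  by split => //; lia.
have [|x [y [y_in y_ge x_in y_lt]]] := IH q; first by move: q_le; rewrite doubleS.
exists x, y; rewrite omegaS /=; split => //.
move: y_in; rewrite !inE => /orP [/eqP ->|->]; last by rewrite !orbT.
by apply/orP; right; apply/orP; left; apply/eqP; lia.
Qed.

Lemma alpha_ascent j p : 2 <= p <= j.*2 + 2 ->
  exists x y, [/\ y \in take p (alpha j), 4 <= y, x \in drop p (alpha j) & y < x].
Proof.
case/andP => p_ge p_le; have [|x [y [y_in y_ge x_in y_lt]]] := @omega_ascent j (p - 2).
  by rewrite leq_subLR addnC.
exists x, y; rewrite -(subnK p_ge) addn2 /=; split => //.
by move: y_in; rewrite !inE => /orP [->|->]; rewrite ?orbT.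
Qed.

(** * alpha is not 2-sortable *)

Lemma perm_drop_take (s t : seq nat) p : perm_eq (drop p s ++ t) s -> perm_eq t (take p s).
Proof.
move=> perm_s; rewrite -(perm_cat2l (drop p s)); apply: perm_trans perm_s _.
by rewrite -{1}(cat_take_drop p s) perm_catC.
Qed.

Lemma drop_succ (s : seq nat) p z r : drop p s = z :: r -> drop p.+1 s = r.
Proof. by move=> drop_s; rewrite -[p.+1]addn1 addnC -drop_drop drop_s /= drop0. Qed.

Lemma rcons_neq_iota (out : seq nat) z :
  out != iota 1 (size out) -> rcons out z != iota 1 (size (rcons out z)).
Proof.
apply: contra; rewrite size_rcons -[(size out).+1]addn1 iotaD cats1 eqseq_rcons.
by case/andP.
Qed.

Lemma mem_iota1_le y z n : z \in iota 1 n -> 0 < y <= z -> y \in iota 1 n.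
Proof. by rewrite !mem_iota; lia. Qed.

Ltac mem_shuffle := rewrite !(mem_cat, inE); repeat case/orP; move=> ->; rewrite /= ?orbT.

Section Unsortable.
Variable j : nat.
Local Notation A := (alpha j).

Definition alpha_state (st : mstate) : Prop :=
  [/\ stacks_sorted st, perm_eq (contents st) A & exists p, st.1.1.1 = drop p A].

Lemma alpha_state_step op st st' : alpha_state st -> step 2 op st = Some st' -> alpha_state st'.
Proof.
case=> sorted_st perm_st [p inp_eq] H; have [sorted' perm'] := step2_sorted_perm sorted_st H.
split => //; first exact: perm_trans perm' perm_st.
clear perm' perm_st.
case: st sorted_st inp_eq H => [[[inp [|d1 [|d2 [|? ?]]]] si] out] // _ /= inp_eq.
case/step2P => [[x [r [_ inp_xr _ ->]]]|[x [r [_ _ _ ->]]]|[x [r [_ _ _ ->]]]|[x [r [_ _ ->]]]];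
  try by exists p.
by exists p.+1; apply/esym/drop_succ; rewrite -inp_eq inp_xr.
Qed.

Definition output_unsorted (st : mstate) : Prop := st.2 != iota 1 (size st.2).

(* y is stuck in I below a larger x that has yet to reach I, while 2 is still
   in the input or in D_1, so it can reach the output only after y does. *)
Definition blocked (st : mstate) : Prop :=
  match st with
  | (inp, [:: d1; d2], si, _) =>
      exists x y, [/\ 3 <= y, y < x, y \in si, x \in inp ++ d1 ++ d2 & 2 \in inp ++ d1]
  | _ => False
  end.

(* [p <= j.*2 + 2]: the entry 1, at position [j.*2 + 2], has not been read. *)
Definition three_pending (st : mstate) : Prop :=
  match st with
  | (inp, [:: d1; _], _, _) => exists p, [/\ inp = drop p A, p <= j.*2 + 2 & 3 \in inp ++ d1]
  | _ => False
  end.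

Definition stuck (st : mstate) : Prop :=
  [\/ output_unsorted st, blocked st | three_pending st].

Lemma output_unsorted_step op st st' : stacks_sorted st -> output_unsorted st ->
  step 2 op st = Some st' -> output_unsorted st'.
Proof.
case: st => [[[inp [|d1 [|d2 [|? ?]]]] si] out] // _ unsorted_out.
case/step2P => [[x [r [_ _ _ ->]]]|[x [r [_ _ _ ->]]]|[x [r [_ _ _ ->]]]|[x [r [_ _ ->]]]] //.
exact: rcons_neq_iota.
Qed.

Lemma blocked_step op st st' : alpha_state st -> blocked st ->
  step 2 op st = Some st' -> stuck st'.
Proof.
case: st => [[[inp [|d1 [|d2 [|? ?]]]] si] out] //.
case=> -[s1 s2 s3] perm_st [p /= inp_eq] [x [y [y_ge y_lt y_si x_in two_in]]].
have x_gt3 : 3 < x := leq_ltn_trans y_ge y_lt.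
rewrite /= cats0 -!catA in perm_st.
have := perm_uniq perm_st; rewrite alpha_uniq => uniq_st.
have rest : perm_eq (d1 ++ d2 ++ si ++ out) (take p A).
  by apply: perm_drop_take; rewrite -inp_eq.
case/step2P => [[z [r [_ inp_zr _ ->]]]|[z [r [_ d1_zr push_z ->]]]|
                [z [r [_ d2_zr push_z ->]]]|[z [r [_ si_zr ->]]]].
- rewrite inp_zr in x_in two_in; constructor 2; exists x, y.
  by split => //; [move: x_in | move: two_in]; mem_shuffle.
- rewrite d1_zr in s1 x_in two_in rest.
  have [z2|z_ne2] := eqVneq 2 z; last first.
    constructor 2; exists x, y; split => //; first by move: x_in; mem_shuffle.
    by move: two_in; rewrite !(mem_cat, inE) (negbTE z_ne2).
  exfalso; subst z; move: x_in; rewrite !(mem_cat, inE) -!orbA => /or4P [x_inp|/eqP x2|x_r|x_d2].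
  + have two_take : 2 \in take p A by rewrite -(perm_mem rest) inE.
    by move: x_inp; rewrite inp_eq (two_in_take_alpha two_take).
  + by move: x_gt3; rewrite x2.
  + by move: (sorted_gtn_head s1 x_r) => /(ltn_trans x_gt3).
  + by move: push_z; rewrite can_push_dec_all // => /allP/(_ x x_d2) /= /(ltn_trans x_gt3).
- rewrite d2_zr in x_in.
  have [xz|x_nez] := eqVneq x z.
    subst z; move: push_z; rewrite can_push_inc_all // => /allP/(_ y y_si) /=.
    by move/(ltn_trans y_lt); rewrite ltnn.
  constructor 2; exists x, y; split => //; first by rewrite inE y_si orbT.
  by move: x_in; rewrite !(mem_cat, inE) (negbTE x_nez).
- rewrite si_zr in y_si uniq_st; move: y_si; rewrite inE => /orP [/eqP yz|y_r]; last first.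
    by constructor 2; exists x, y.
  subst z; constructor 1; apply/negP => /eqP /= out_iota.
  have : 2 \in rcons out y.
    rewrite out_iota; apply: (@mem_iota1_le _ y); last exact: ltnW.
    by rewrite -out_iota mem_rcons mem_head.
  rewrite mem_rcons inE => /orP [/eqP two_y|two_out]; first by move: y_ge; rewrite -two_y.
  move: uniq_st; rewrite catA cat_uniq => /and3P [_ /hasPn/(_ 2) two_notin _].
  by move: two_in; apply/negP; apply: two_notin; rewrite !mem_cat two_out !orbT.
Qed.

Lemma three_pending_step op st st' : alpha_state st -> three_pending st ->
  step 2 op st = Some st' -> stuck st'.
Proof.
case: st => [[[inp [|d1 [|d2 [|? ?]]]] si] out] //.
case=> -[s1 s2 s3] perm_st _ [p [inp_eq p_le three_in]].
have {perm_st} rest : perm_eq (d1 ++ d2 ++ si ++ out) (take p A).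
  by apply: perm_drop_take; rewrite -inp_eq; move: perm_st; rewrite /= cats0 -!catA.
case/step2P => [[z [r [_ inp_zr push_z ->]]]|[z [r [_ d1_zr push_z ->]]]|
                [z [r [_ _ _ ->]]]|[z [r [_ _ ->]]]]; last 2 first.
1-2: by constructor 3; exists p.
- have [p_lt|p_ge] := ltnP p (j.*2 + 2).
    constructor 3; exists p.+1; split => //.
      by apply/esym/drop_succ; rewrite -inp_eq inp_zr.
    by move: three_in; rewrite inp_zr; mem_shuffle.
  have drop_end : drop p A = [:: 1; 5; 2].
    by rewrite alphaE drop_size_cat // size_alpha_init; apply/eqP; rewrite eqn_leq p_le p_ge.
  move: inp_zr three_in push_z; rewrite inp_eq drop_end => -[<- _].
  rewrite mem_cat !inE /= => three_d1.
  by rewrite can_push_dec_all // => /allP/(_ 3 three_d1).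
- rewrite d1_zr in s1 three_in rest.
  have [z3|z_ne3] := eqVneq 3 z; last first.
    constructor 3; exists p; split => //.
    by move: three_in; rewrite !(mem_cat, inE) (negbTE z_ne3).
  subst z.
  have taken_ge3 x : x \in (3 :: r) ++ d2 ++ si ++ out -> 3 <= x.
    by rewrite (perm_mem rest); exact: take_alpha_ge3.
  have r_nil : r = [::].
    case E: r => [//|w r']; have w_r : w \in r by rewrite E mem_head.
    have := sorted_gtn_head s1 w_r.
    by rewrite ltnNge taken_ge3 // mem_cat inE w_r orbT.
  have d2_nil : d2 = [::].
    case E: d2 push_z => [//|w d2'] /= w_lt; have w_d2 : w \in d2 by rewrite E mem_head.
    by move: w_lt; rewrite ltnNge taken_ge3 // !mem_cat w_d2 orbT.
  subst r d2; case: out rest taken_ge3 => [|o out'] rest taken_ge3.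
  + have [|x [y [y_take y_ge4 x_drop y_lt]]] := @alpha_ascent j p.
      by rewrite p_le andbT; apply: (@three_in_take_alpha j); rewrite -(perm_mem rest) mem_head.
    constructor 2; exists x, y; split => //.
    * exact: ltnW.
    * move: y_take; rewrite -(perm_mem rest) /= cats0 inE => /orP [/eqP y3|//].
      by move: y_ge4; rewrite y3.
    * by rewrite inp_eq mem_cat x_drop.
    * by rewrite inp_eq cats0 (two_in_drop_alpha p_le).
  + constructor 1; apply/negP => /eqP [o1 _].
    by have := taken_ge3 o; rewrite o1 !(mem_cat, inE) eqxx !orbT => /(_ isT).
Qed.

Lemma stuck_step op st st' : alpha_state st -> stuck st ->
  step 2 op st = Some st' -> stuck st'.
Proof.
move=> alpha_st [unsorted|blocked_st|pending] H.
- by constructor 1; apply: output_unsorted_step H; case: alpha_st.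
- exact: blocked_step H.
- exact: three_pending_step H.
Qed.

Lemma stuck_run ops st st' : alpha_state st -> stuck st ->
  run 2 ops st = Some st' -> stuck st'.
Proof.
elim: ops st => [|op ops IH] st alpha_st stuck_st /=; first by case=> <-.
rewrite run_cons; case E: (step 2 op st) => [st1|] //.
by apply: IH; [exact: alpha_state_step E | exact: stuck_step E].
Qed.

Lemma alpha_unsortable : ~ sortable 2 A.
Proof.
case=> ops run_A.
have alpha_start : alpha_state (start2 A).
  by split => //; [rewrite /= !cats0 | exists 0; rewrite drop0].
have stuck_start : stuck (start2 A).
  by constructor 3; exists 0; rewrite drop0 mem_cat /alpha !inE eqxx !orbT.
have := stuck_run alpha_start stuck_start run_A.
rewrite alpha_sort; case => [|[x [y [_ _ //]]]|[p [_ _ //]]].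
by rewrite /output_unsorted /= size_iota eqxx.
Qed.

End Unsortable.

(** * One-point deletions of alpha are 2-sortable *)

Definition pair_ops := [:: 0; 0; 1; 2; 2; 1].
Definition pairs_ops m := flatten (nseq m pair_ops).

(* Each pair (2k+2, 2k+5) of omega is absorbed by d0 d0 d1 d2 d2 d1: the entry
   2k+5 and the old top 2k+4 of D_2 go to I, and 2k+2 becomes the top of D_2. *)
Lemma run_pairs m i d1 rest si out T :
  can_push_dec (i.*2 + 4) d1 -> can_push_dec (i.*2 + 4) rest ->
  can_push_inc ((i + m).*2 + 5) si ->
  exists si',
    run 2 (pairs_ops m) (omega_from i.+1 m ++ T, [:: d1; ((i + m).*2 + 4) :: rest], si, out)
              = Some (T, [:: d1; (i.*2 + 4) :: rest], si', out) /\ can_push_inc (i.*2 + 5) si'.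
Proof.
move=> push_d1 push_rest; elim: m si => [|m IH] si push_si.
  by exists si; rewrite addn0 in push_si *.
rewrite omega_fromS /pairs_ops /= -/(pairs_ops m).
have -> : (i.+1 + m).*2.+2 = (i + m).*2 + 4 by rewrite -!muln2; lia.
have -> : (i.+1 + m).*2 + 5 = (i + m).*2 + 7 by rewrite -!muln2; lia.
have -> : (i + m.+1).*2 + 4 = (i + m).*2 + 6 by rewrite -!muln2; lia.
rewrite run_cons step_d0; last by apply: can_push_dec_mono push_d1; rewrite -!muln2; lia.
rewrite run_cons step_d0 /=; last lia.
rewrite run_cons step_d1 /=; last lia.
rewrite run_cons step_d2; last by apply: can_push_inc_mono push_si; rewrite -!muln2; lia.
rewrite run_cons step_d2 /=; last lia.
rewrite run_cons step_d1; last by apply: can_push_dec_mono push_rest; rewrite -!muln2; lia.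
by apply: IH => /=; lia.
Qed.

Ltac exec_steps :=
  repeat (rewrite run_cons; first [ rewrite step_d0; last done | rewrite step_d1; last done
                                  | rewrite step_d2; last done | rewrite step_d3 ]).

Definition finish_c := [:: 0; 0; 1; 0; 2; 2; 1; 2; 1; 2].

Lemma run_finish_c c si : 2 < c < 5 -> can_push_inc 5 si ->
  run 2 finish_c ([:: 1; 5; 2], [:: [::]; [:: c]], si, [::]) =
  Some ([::], [:: [::]; [::]], [:: 1; 2; c; 5] ++ si, [::]).
Proof. by case/andP=> c_gt2 c_lt5 push_si; exec_steps. Qed.

Definition finish_43 := [:: 0; 0; 1; 0; 2; 2; 2; 1; 2; 1; 2].

Lemma run_finish_43 si : can_push_inc 5 si ->
  run 2 finish_43 ([:: 1; 5; 2], [:: [::]; [:: 4; 3]], si, [::]) =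
  Some ([::], [:: [::]; [::]], [:: 1; 2; 3; 4; 5] ++ si, [::]).
Proof. by move=> push_si; exec_steps. Qed.

Definition finish_52 := [:: 0; 1; 2; 2; 1; 2; 0; 1; 2].

Lemma run_finish_52 si : can_push_inc 5 si ->
  run 2 finish_52 ([:: 5; 2], [:: [:: 3]; [:: 4]], si, [::]) =
  Some ([::], [:: [::]; [::]], [:: 2; 3; 4; 5] ++ si, [::]).
Proof. by move=> push_si; exec_steps. Qed.

Definition finish_12 := [:: 2; 1; 2; 0; 0; 1; 2; 1; 2].

Lemma run_finish_12 si : can_push_inc 5 si ->
  run 2 finish_12 ([:: 1; 2], [:: [:: 3]; [:: 4]], si, [::]) =
  Some ([::], [:: [::]; [::]], [:: 1; 2; 3; 4] ++ si, [::]).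
Proof. by move=> /(can_push_inc_mono (isT : 4 <= 5)) push_si; exec_steps. Qed.

Definition finish_15 := [:: 2; 1; 2; 0; 1; 2; 3; 3; 3; 0; 1; 2].

Lemma run_finish_15 si : can_push_inc 5 si ->
  run 2 finish_15 ([:: 1; 5], [:: [:: 3]; [:: 4]], si, [::]) =
  Some ([::], [:: [::]; [::]], 5 :: si, [:: 1; 3; 4]).
Proof. by move=> push_si; have push4 := can_push_inc_mono (isT : 4 <= 5) push_si; exec_steps. Qed.

Definition after3_ops m :=
  if m is m'.+1 then [:: 0; 0; 1; 2; 1] ++ pairs_ops m' ++ finish_43 else finish_c.

Lemma run_after3 m si : can_push_inc (m.*2 + 5) si ->
  exists si', run 2 (after3_ops m) (omega m ++ [:: 1; 5; 2], [:: [::]; [:: 3]], si, [::]) =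
              Some ([::], [:: [::]; [::]], si', [::]).
Proof.
case: m => [|m] push_si; first by exists ([:: 1; 2; 3; 5] ++ si); apply: run_finish_c.
have {}push_si : can_push_inc (m.*2 + 7) si.
  by move: push_si; rewrite (_ : m.+1.*2 + 5 = m.*2 + 7) // doubleS; lia.
have [|si1 [run_m push_si1]] :=
  @run_pairs m 0 [::] [:: 3] (m.*2 + 7 :: si) [::] [:: 1; 5; 2] isT isT.
  by rewrite add0n /=; lia.
exists ([:: 1; 2; 3; 4; 5] ++ si1); rewrite omegaS /after3_ops -catA.
rewrite run_cons step_d0 // run_cons step_d0 /=; last lia.
rewrite run_cons step_d1; last by rewrite /=; lia.
rewrite run_cons step_d2 //.
rewrite run_cons step_d1 /=; last lia.
by rewrite add0n in run_m; rewrite run_cat -[m.*2.+4]addn4 omegaE run_m run_finish_43.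
Qed.

Lemma sortable_del_max j : sortable 2 (3 :: omega j ++ [:: 1; 5; 2]).
Proof.
have [si run_j] := @run_after3 j [::] isT.
apply: (@sortable_of_run_nil _ ([:: 0; 1] ++ after3_ops j) si).
by rewrite run_cons step_d0 // run_cons step_d1 // run_j.
Qed.

Lemma sortable_del_3 j : sortable 2 ((j.*2 + 4) :: omega j ++ [:: 1; 5; 2]).
Proof.
have [si [run_j push_si]] := @run_pairs j 0 [::] [::] [::] [::] [:: 1; 5; 2] isT isT isT.
apply: (@sortable_of_run_nil _ ([:: 0; 1] ++ pairs_ops j ++ finish_c) ([:: 1; 2; 4; 5] ++ si)).
rewrite run_cons step_d0 // run_cons step_d1 // run_cat omegaE.
by rewrite add0n in run_j; rewrite run_j run_finish_c.
Qed.

Lemma run_init_pairs i t T : exists si,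
  run 2 ([:: 0; 1; 0] ++ pairs_ops t)
        ([:: (i + t).*2 + 4; 3] ++ omega_from i.+1 t ++ T, [:: [::]; [::]], [::], [::])
  = Some (T, [:: [:: 3]; [:: i.*2 + 4]], si, [::]) /\ can_push_inc (i.*2 + 5) si.
Proof.
have [|si [run_t push_si]] := @run_pairs t i [:: 3] [::] [::] [::] T _ isT isT.
  by rewrite /=; lia.
exists si; split; last exact: push_si.
by rewrite /= run_cons step_d0 // run_cons step_d1 // run_cons step_d0.
Qed.

Lemma run_init_all_pairs j T : exists si,
  run 2 ([:: 0; 1; 0] ++ pairs_ops j) (alpha_init j ++ T, [:: [::]; [::]], [::], [::])
  = Some (T, [:: [:: 3]; [:: 4]], si, [::]) /\ can_push_inc 5 si.
Proof. by have := run_init_pairs 0 j T; rewrite add0n /alpha_init -catA. Qed.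

Lemma sortable_del_1 j : sortable 2 (alpha_init j ++ [:: 5; 2]).
Proof.
have [si [run_j push_si]] := run_init_all_pairs j [:: 5; 2].
apply: (@sortable_of_run_nil _ (([:: 0; 1; 0] ++ pairs_ops j) ++ finish_52)
                             ([:: 2; 3; 4; 5] ++ si)).
by rewrite run_cat run_j run_finish_52.
Qed.

Lemma sortable_del_5 j : sortable 2 (alpha_init j ++ [:: 1; 2]).
Proof.
have [si [run_j push_si]] := run_init_all_pairs j [:: 1; 2].
apply: (@sortable_of_run_nil _ (([:: 0; 1; 0] ++ pairs_ops j) ++ finish_12)
                             ([:: 1; 2; 3; 4] ++ si)).
by rewrite run_cat run_j run_finish_12.
Qed.

Lemma sortable_del_2 j : sortable 2 (alpha_init j ++ [:: 1; 5]).
Proof.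
have [si [run_j push_si]] := run_init_all_pairs j [:: 1; 5].
apply: (@sortable_of_run _ (([:: 0; 1; 0] ++ pairs_ops j) ++ finish_15) (5 :: si) [:: 1; 3; 4]).
  by rewrite run_cat run_j run_finish_15.
have [[_ _ sorted_si] _] := run2_sorted_perm (stacks_sorted_start _) run_j.
apply: (sub_sorted (fun x y => @ltnW x y)) => /=.
exact: sorted_push_inc push_si sorted_si.
Qed.

Lemma sortable_del_pair_low i t :
  sortable 2 ([:: (i.+1 + t).*2 + 4; 3] ++ omega_from i.+2 t ++
               [:: i.*2 + 7] ++ omega i ++ [:: 1; 5; 2]).
Proof.
have [si1 [run_t push_si1]] := run_init_pairs i.+1 t ([:: i.*2 + 7] ++ omega i ++ [:: 1; 5; 2]).
have [|si2 run_i] := @run_after3 i (i.*2 + 6 :: i.*2 + 7 :: si1).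
  by rewrite /=; lia.
apply: (@sortable_of_run_nil _
          (([:: 0; 1; 0] ++ pairs_ops t) ++ [:: 0; 1; 2; 2; 1] ++ after3_ops i) si2).
rewrite run_cat run_t (_ : i.+1.*2 + 4 = i.*2 + 6); last by rewrite doubleS; lia.
rewrite (_ : i.+1.*2 + 5 = i.*2 + 7) in push_si1; last by rewrite doubleS; lia.
rewrite run_cons step_d0 /=; last lia.
rewrite run_cons step_d1 /=; last lia.
rewrite run_cons step_d2 // run_cons step_d2 /=; last lia.
by rewrite run_cons step_d1.
Qed.

Lemma sortable_del_pair_high i t :
  sortable 2 ([:: (i.+1 + t).*2 + 4; 3] ++ omega_from i.+2 t ++
               [:: i.*2.+4] ++ omega i ++ [:: 1; 5; 2]).
Proof.
have [si1 [run_t push_si1]] := run_init_pairs i.+1 t ([:: i.*2.+4] ++ omega i ++ [:: 1; 5; 2]).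
have [|si2 [run_i push_si2]] :=
  @run_pairs i 0 [::] [:: 3] (i.*2 + 6 :: si1) [::] [:: 1; 5; 2] isT isT.
  by rewrite add0n /=; lia.
apply: (@sortable_of_run_nil _
          (([:: 0; 1; 0] ++ pairs_ops t) ++ [:: 2; 1; 0; 1] ++ pairs_ops i ++ finish_43)
          ([:: 1; 2; 3; 4; 5] ++ si2)).
rewrite run_cat run_t (_ : i.+1.*2 + 4 = i.*2 + 6); last by rewrite doubleS; lia.
rewrite run_cons step_d2 /=; last by apply: can_push_inc_mono push_si1; rewrite doubleS; lia.
rewrite run_cons step_d1 // run_cons step_d0 // run_cons step_d1 /=; last lia.
by rewrite add0n in run_i; rewrite run_cat -[i.*2.+4]addn4 omegaE run_i run_finish_43.
Qed.

Lemma delete_at_cat (s1 s2 : seq nat) i : size s1 <= i ->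
  delete_at i (s1 ++ s2) = s1 ++ delete_at (i - size s1) s2.
Proof.
move=> le_s1; rewrite /delete_at take_cat drop_cat ltnNge le_s1 ltnNge ltnW //.
by rewrite catA subSn.
Qed.

Lemma alpha_pair_split i t : alpha (i.+1 + t) =
  ([:: (i.+1 + t).*2 + 4; 3] ++ omega_from i.+2 t) ++
  [:: i.*2.+4; i.*2 + 7] ++ omega i ++ [:: 1; 5; 2].
Proof. by rewrite /alpha omegaE omega_from_cat -omegaE omegaS -!catA. Qed.

Lemma sortable_delete_alpha j pos : pos < size (alpha j) -> sortable 2 (delete_at pos (alpha j)).
Proof.
rewrite size_alpha; case: pos => [|[|pos]] pos_lt.
- exact: sortable_del_max.
- by rewrite /delete_at /= drop0; apply: sortable_del_3.
have [pos_lt2|pos_ge] := ltnP pos j.*2.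
  have [i j_eq] : exists i, j = i.+1 + pos./2.
    by move: pos_lt2; rewrite -ltn_half_double => half_lt; exists (j - pos./2).-1; lia.
  rewrite j_eq alpha_pair_split delete_at_cat; last first.
    by rewrite size_cat size_omega_from /= add2n !ltnS halfK leq_subr.
  rewrite size_cat size_omega_from /=.
  have -> : pos.+2 - (2 + pos./2.*2) = odd pos.
    by rewrite add2n !subSS -{1}(odd_double_half pos) addnK.
  case: (odd pos); rewrite /delete_at /= ?drop0.
  + exact: sortable_del_pair_high.
  + exact: sortable_del_pair_low.
move: pos_lt; have [k ->] : exists k, pos = j.*2 + k by exists (pos - j.*2); rewrite subnKC.
rewrite -!addnS leq_add2l => k_lt.
rewrite alphaE delete_at_cat size_alpha_init ?leq_add2l // subnDl !subSS subn0.
case: k k_lt => [|[|[|//]]] _; rewrite /delete_at /= ?drop0.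
- exact: sortable_del_1.
- exact: sortable_del_5.
- exact: sortable_del_2.
Qed.

(** * The antichain *)

Lemma size_std s : size (std s) = size s.
Proof. exact: size_map. Qed.

Lemma size_contains sigma pi : contains sigma pi -> size sigma <= size pi.
Proof.
case=> m /(congr1 size); rewrite !size_std => <-.
exact: size_subseq (mask_subseq m pi).
Qed.

Lemma mask_delete_at (s : seq nat) m : size (mask m s) < size s ->
  exists m' i, i < size s /\ mask m s = mask m' (delete_at i s).
Proof.
elim: s m => [|x s IH] [|b m] //= lt_s.
- by exists [::], 0; rewrite mask0s.
- case: b lt_s => /= lt_s; last by exists m, 0; rewrite /delete_at /= drop0.
  have [|m' [i [i_lt mask_eq]]] := IH m; first by rewrite -ltnS.
  by exists (true :: m'), i.+1; rewrite mask_eq.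
Qed.

Lemma contains_delete_at sigma pi : contains sigma pi -> size sigma < size pi ->
  exists2 i, i < size pi & contains sigma (delete_at i pi).
Proof.
case=> m std_eq; rewrite -size_std -std_eq size_std => /mask_delete_at [m' [i [i_lt mask_eq]]].
by exists i => //; exists m'; rewrite -mask_eq.
Qed.

Lemma uniq_delete_at (s : seq nat) i : uniq s -> uniq (delete_at i s).
Proof.
apply: subseq_uniq; rewrite -{2}(cat_take_drop i s) /delete_at.
by apply: cat_subseq => //; rewrite -addn1 addnC -drop_drop; exact: drop_subseq.
Qed.

Lemma contains_alpha_eq j k : contains (alpha j) (alpha k) -> j = k.
Proof.
move=> contains_jk; apply/double_inj/eqP; rewrite -(eqn_add2r 5) -!size_alpha eqn_leq.
rewrite size_contains //= leqNgt; apply/negP => /(contains_delete_at contains_jk) [i i_lt].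
move/(sortable_contains (uniq_delete_at i (alpha_uniq k)) (sortable_delete_alpha i_lt)).
by rewrite std_alpha; apply: alpha_unsortable.
Qed.

Theorem mainTheorem3 :
  (forall j k : nat, j <> k -> ~ contains (alpha j) (alpha k))
  /\ (forall j : nat, ~ sortable 2 (alpha j))
  /\ (forall j i : nat, i < size (alpha j) ->
        sortable 2 (std (delete_at i (alpha j)))).
Proof.
split; [|split].
- by move=> j k neq_jk /contains_alpha_eq.
- exact: alpha_unsortable.
- by move=> j i i_lt; apply/sortable_std/sortable_delete_alpha.
Qed.
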